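(* Let $\mathcal{I}$ be an interpreted system, $\mathit{Prop}$ a set of atomic propositions, $S$ and $T$ indexical sets of agents in $\mathcal{I}$, and $\approx$ a synchronous epistemic bisimulation on $\mathcal{I}$ with respect to $\mathit{Prop}$ such that (a) $S\subseteq T$ is valid in $\mathcal{I}$, and (b) for every point $(r,m)$ of $\mathcal{I}$ there exists a point $(r',m)$ with $(r,m)\approx(r',m)$ and $S(r',m)=T(r,m)$. Then for every $p\in\mathit{Prop}$ and every agent $i$, the formula $B^S_i\,CB_S\,p\Leftrightarrow B^T_i\,CB_T\,p$ is valid in $\mathcal{I}$.
   Context: Agents $\mathrm{Agt}=\{1,\dots,n\}$. An interpreted system $\mathcal{I}=(\mathcal{R},\pi)$ consists of a set of runs (functions from times $\mathbb{N}$ to global states $(s_e,s_1,\dots,s_n)$) and an interpretation $\pi$ giving the atomic propositions true at each point $(r,m)$; $r_i(m)$ is agent $i$'s local state; $(r,m)\sim_i(r',m')$ iff $r_i(m)=r'_i(m')$; $K_i\phi$ holds at $(r,m)$ iff $\phi$ holds at all $(r',m')\sim_i(r,m)$. An indexical set $S$ assigns $S(r,m)\subseteq\mathrm{Agt}$ to each point; $i\in S$ holds at $(r,m)$ iff $i\in S(r,m)$; $S\subseteq T$ is valid if $S(r,m)\subseteq T(r,m)$ at every point. $B^S_i\phi:=K_i(i\in S\Rightarrow\phi)$; $E^B_S\phi:=\bigwedge_{i\in S}B^S_i\phi$ (over $i\in S(r,m)$ at the point of evaluation); $CB_S\phi:=\bigwedge_{k\ge1}(E^B_S)^k\phi$.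 A synchronous epistemic bisimulation on $\mathcal{I}$ with respect to $\mathit{Prop}$ is a relation $\approx$ on points such that whenever $(r,m)\approx(r',m')$: $m=m'$; for all $p\in\mathit{Prop}$, $p$ holds at $(r,m)$ iff it holds at $(r',m)$; and $(r,m)\sim_i(r',m)$ for every agent $i$. A formula is valid in $\mathcal{I}$ if it holds at every point. *)

From mathcomp Require Import all_boot.
Set Implicit Arguments. Unset Strict Implicit. Unset Printing Implicit Defensive.

Record interp_system (n : nat) := IS {
  Le : Type;
  L : 'I_n -> Type;
  Atom : Type;
  runs : (nat -> Le * (forall i : 'I_n, L i)) -> Prop;
  pi : (nat -> Le * (forall i : 'I_n, L i)) -> nat -> Atom -> Prop
}.

Section Semantics.
Variables (n : nat) (I : interp_system n).

Definition run := nat -> Le I * (forall i : 'I_n, L I i).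

Definition local (i : 'I_n) (r : run) (m : nat) : L I i := (r m).2 i.

Definition indist (i : 'I_n) (r : run) (m : nat) (r' : run) (m' : nat) : Prop :=
  local i r m = local i r' m'.

Definition formula := run -> nat -> Prop.

Definition atom (p : Atom I) : formula := fun r m => @pi _ I r m p.

Definition K (i : 'I_n) (phi : formula) : formula :=
  fun r m => forall r' m', @runs _ I r' -> indist i r m r' m' -> phi r' m'.

Definition indexical := run -> nat -> 'I_n -> Prop.

Definition inS (S : indexical) (i : 'I_n) : formula := fun r m => S r m i.

Definition impl (phi psi : formula) : formula := fun r m => phi r m -> psi r m.
Definition iff_f (phi psi : formula) : formula := fun r m => phi r m <-> psi r m.

Definition B (S : indexical) (i : 'I_n) (phi : formula) : formula :=
  K i (impl (inS S i) phi).

Definition EB (S : indexical) (phi : formula) : formula :=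
  fun r m => forall i, S r m i -> B S i phi r m.

Definition CB (S : indexical) (phi : formula) : formula :=
  fun r m => forall k, 1 <= k -> iter k (EB S) phi r m.

Definition valid (phi : formula) : Prop := forall r m, @runs _ I r -> phi r m.

Definition valid_subset (S T : indexical) : Prop :=
  forall r m, @runs _ I r -> forall i, S r m i -> T r m i.

Definition sync_epi_bisim (Props : Atom I -> Prop)
    (bis : run -> nat -> run -> nat -> Prop) : Prop :=
  forall r m r' m', @runs _ I r -> @runs _ I r' -> bis r m r' m' ->
    [/\ m = m',
        (forall p, Props p -> (@pi _ I r m p <-> @pi _ I r' m p)) &
        (forall i, indist i r m r' m)].

End Semantics.

(* Common belief for T implies common belief for S because S is pointwise
   smaller: every E^B_T-chain is in particular an E^B_S-chain.  Conversely,
   a T-chain starting at (r,m) is matched step by step by an S-chain through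
   bisimilar points (r',m) with S(r',m) = T(r,m); bisimilar points look the
   same to every agent and agree on the atoms of Prop, so the S-beliefs at
   the copies are T-beliefs at the originals. *)
From mathcomp Require Import all_boot.

Section Antimonotonicity.
Context {n : nat} {I : interp_system n} {S T : indexical I}.
Hypothesis subST : valid_subset S T.

Lemma B_antimono {i} {phi psi : formula I} :
  valid (impl phi psi) -> valid (impl (B T i phi) (B S i psi)).
Proof.
move=> phi_psi r m _ Bphi r' m' r'R ind Si.
exact: phi_psi r' m' r'R (Bphi r' m' r'R ind (subST r' m' r'R i Si)).
Qed.

Lemma EB_antimono {phi psi : formula I} :
  valid (impl phi psi) -> valid (impl (EB T phi) (EB S psi)).
Proof.
move=> phi_psi r m rR EBphi i Si.
exact: B_antimono phi_psi r m rR (EBphi i (subST r m rR i Si)).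
Qed.

Lemma iter_EB_antimono k {phi psi : formula I} :
  valid (impl phi psi) ->
  valid (impl (iter k (EB T) phi) (iter k (EB S) psi)).
Proof. by move=> phi_psi; elim: k => [|k IHk] //=; apply: EB_antimono. Qed.

Lemma CB_antimono {phi psi : formula I} :
  valid (impl phi psi) -> valid (impl (CB T phi) (CB S psi)).
Proof.
move=> phi_psi r m rR CBphi k k_gt0.
exact: iter_EB_antimono k phi psi phi_psi r m rR (CBphi k k_gt0).
Qed.

End Antimonotonicity.

Section BisimulationTransfer.
Context {n : nat} {I : interp_system n} {Props : Atom I -> Prop}.
Context {S T : indexical I} {bis : run I -> nat -> run I -> nat -> Prop}.
Hypothesis bisP : sync_epi_bisim Props bis.
Hypothesis bis_reindex : forall r m, @runs _ I r ->
  exists r', @runs _ I r' /\ bis r m r' m /\ (forall i, S r' m i <-> T r m i).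

Definition bis_transfer (psi chi : formula I) : Prop :=
  forall r r' m, @runs _ I r -> @runs _ I r' -> bis r m r' m ->
    (forall i, S r' m i <-> T r m i) -> psi r' m -> chi r m.

Lemma atom_transfer {p} : Props p -> bis_transfer (atom p) (atom p).
Proof.
move=> Pp r r' m rR r'R rbis _.
by case: (bisP r m r' m rR r'R rbis) => _ /(_ p Pp) [_ r'_r] _.
Qed.

Lemma B_transfer {i} {psi chi : formula I} r r' m :
  bis_transfer psi chi -> indist i r m r' m ->
  B S i psi r' m -> B T i chi r m.
Proof.
move=> psi_chi rr' Bpsi y m' yR ry Ti.
have [y' [y'R [ybis Sy'Ty]]] := bis_reindex y m' yR.
have [_ _ yy'] := bisP y m' y' m' yR y'R ybis.
have ry' : indist i r' m y' m' by rewrite /indist -rr' ry (yy' i).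
exact: psi_chi y y' m' yR y'R ybis Sy'Ty (Bpsi y' m' y'R ry' (proj2 (Sy'Ty i) Ti)).
Qed.

Lemma EB_transfer {psi chi : formula I} :
  bis_transfer psi chi -> bis_transfer (EB S psi) (EB T chi).
Proof.
move=> psi_chi r r' m rR r'R rbis Sr'Tr EBpsi i Ti.
have [_ _ rr'] := bisP r m r' m rR r'R rbis.
exact: B_transfer r r' m psi_chi (rr' i) (EBpsi i (proj2 (Sr'Tr i) Ti)).
Qed.

Lemma iter_EB_transfer k {psi chi : formula I} :
  bis_transfer psi chi ->
  bis_transfer (iter k (EB S) psi) (iter k (EB T) chi).
Proof. by move=> psi_chi; elim: k => [|k IHk] //=; apply: EB_transfer. Qed.

Lemma CB_transfer {psi chi : formula I} :
  bis_transfer psi chi -> bis_transfer (CB S psi) (CB T chi).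
Proof.
move=> psi_chi r r' m rR r'R rbis Sr'Tr CBpsi k k_gt0.
exact: iter_EB_transfer k psi chi psi_chi r r' m rR r'R rbis Sr'Tr (CBpsi k k_gt0).
Qed.

End BisimulationTransfer.

Theorem proposition10 (n : nat) (I : interp_system n) (Props : Atom I -> Prop)
  (S T : indexical I) (bis : run I -> nat -> run I -> nat -> Prop) :
  sync_epi_bisim Props bis ->
  valid_subset S T ->
  (forall r m, @runs _ I r ->
     exists r', @runs _ I r' /\ bis r m r' m /\ (forall i, S r' m i <-> T r m i)) ->
  forall (p : Atom I) (i : 'I_n), Props p ->
    valid (iff_f (B S i (CB S (atom p))) (B T i (CB T (atom p)))).
Proof.
move=> bisP subST bis_reindex p i Pp r m rR; split=> Bp.
- have CB_atom := CB_transfer bisP bis_reindex (atom_transfer bisP Pp).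
  exact: (B_transfer bisP bis_reindex r r m CB_atom erefl Bp).
- have CB_atom := CB_antimono subST (fun r m _ (CBp : atom p r m) => CBp).
  exact: (B_antimono subST CB_atom r m rR Bp).
Qed.
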